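(* Suppose there is a horizontal lift along $\phi_0:\mathcal{A}\to\mathcal{B}$ and $H^2_{\mathrm{CE,der}}(\mathcal{A},\mathcal{B})=\{0\}$. Then for any formal Poisson deformations $\pi$ of $\pi_0$ and $\sigma$ of $\sigma_0$ there exists a derivation $X\in\lambda\mathrm{Der}(\mathcal{B})[[\lambda]]$ such that $\Phi=\exp(X)\phi_0:(\mathcal{A}[[\lambda]],\pi)\to(\mathcal{B}[[\lambda]],\sigma)$ is a Poisson morphism.
   Context: $\mathbb{K}$ is a field of characteristic zero (e.g. $\mathbb{R}$ or $\mathbb{C}$). $\mathcal{A},\mathcal{B}$ are commutative $\mathbb{K}$-algebras with Poisson brackets $\pi_0=\{\cdot,\cdot\}_{\mathcal{A}}$, $\sigma_0=\{\cdot,\cdot\}_{\mathcal{B}}$, and $\phi_0:\mathcal{A}\to\mathcal{B}$ is a Poisson morphism (algebra morphism preserving brackets). A formal Poisson deformation of $\pi_0$ is a $\mathbb{K}[[\lambda]]$-bilinear Poisson bracket $\pi=\sum_j\lambda^j\pi_j$ on $\mathcal{A}[[\lambda]]$ (with its $\lambda$-linearly extended commutative product) whose zeroth-order term is $\pi_0$. $\mathrm{Der}(\mathcal{B})$ is the space of derivations of $\mathcal{B}$; for $X\in\lambda\mathrm{Der}(\mathcal{B})[[\lambda]]$, $\exp(X)=\sum_n X^n/n!$ is an algebra automorphism of $\mathcal{B}[[\lambda]]$; maps are extended $\lambda$-linearly. Chevalley–Eilenberg complex: $C^0_{\mathrm{CE}}(\mathcal{A},\mathcal{B})=\mathcal{B}$,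 $C^k_{\mathrm{CE}}(\mathcal{A},\mathcal{B})$ = $k$-linear antisymmetric maps $\mathcal{A}^k\to\mathcal{B}$, with $(\delta D)(a_0,\dots,a_k)=\sum_j(-1)^j\{\phi_0(a_j),D(a_0,\dots,\widehat{a_j},\dots,a_k)\}_{\mathcal{B}}+\sum_{i<j}(-1)^{i+j}D(\{a_i,a_j\}_{\mathcal{A}},a_0,\dots,\widehat{a_i},\dots,\widehat{a_j},\dots,a_k)$ (for undeformed brackets). $C^k_{\mathrm{CE,der}}(\mathcal{A},\mathcal{B})$ is the subcomplex of cochains that are derivations along $\phi_0$ in each argument: $D(\dots,aa',\dots)=\phi_0(a)D(\dots,a',\dots)+D(\dots,a,\dots)\phi_0(a')$ (with $C^0_{\mathrm{CE,der}}=\mathcal{B}$); its cohomology is $H^\bullet_{\mathrm{CE,der}}(\mathcal{A},\mathcal{B})$. A horizontal lift along $\phi_0$ is a map $C^1_{\mathrm{CE,der}}(\mathcal{A},\mathcal{B})\to\mathrm{Der}(\mathcal{B})$, $D\mapsto D^h$, with $(aD)^h=\phi_0(a)D^h$ for $a\in\mathcal{A}$ (where $(aD)(a_1)=\phi_0(a)D(a_1)$) and $D^h\circ\phi_0=D$. *)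

From HB Require Import structures.
From mathcomp Require Import all_boot all_order all_algebra.
Set Implicit Arguments. Unset Strict Implicit. Unset Printing Implicit Defensive.
Import Order.TTheory GRing.Theory Num.Theory.
Local Open Scope ring_scope.

Section Defs.
Variable K : fieldType.

Definition is_klinear (U V : lmodType K) (f : U -> V) : Prop :=
  forall (k : K) (x y : U), f (k *: x + y) = k *: f x + f y.

Definition is_kbilinear (U V W : lmodType K) (f : U -> V -> W) : Prop :=
  (forall y, is_klinear (fun x => f x y)) /\ (forall x, is_klinear (f x)).

Definition is_poisson_bracket (A : comAlgType K) (br : A -> A -> A) : Prop :=
  [/\ is_kbilinear br,
      (forall a b, br a b = - br b a),
      (forall a b c, br a (b * c) = br a b * c + b * br a c) &
      (forall a b c, br a (br b c) + br b (br c a) + br c (br a b) = 0)].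

Definition is_alg_morphism (A B : comAlgType K) (phi : A -> B) : Prop :=
  [/\ is_klinear phi, (forall a b, phi (a * b) = phi a * phi b) & phi 1 = 1].

Definition is_poisson_morphism (A B : comAlgType K)
  (brA : A -> A -> A) (brB : B -> B -> B) (phi : A -> B) : Prop :=
  is_alg_morphism phi /\ forall a b, phi (brA a b) = brB (phi a) (phi b).

Definition is_derivation (B : comAlgType K) (X : B -> B) : Prop :=
  is_klinear X /\ forall x y, X (x * y) = x * X y + X x * y.

Definition is_der_along (A B : comAlgType K) (phi0 : A -> B) (D : A -> B) : Prop :=
  is_klinear D /\ forall a a', D (a * a') = phi0 a * D a' + D a * phi0 a'.

Section CE.
Variables (A B : comAlgType K) (brA : A -> A -> A) (brB : B -> B -> B)
          (phi0 : A -> B).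

Definition C1der (D : A -> B) : Prop := is_der_along phi0 D.

Definition C2der (D : A -> A -> B) : Prop :=
  [/\ is_kbilinear D, (forall a b, D a b = - D b a),
      (forall b, is_der_along phi0 (fun a => D a b)) &
      (forall a, is_der_along phi0 (D a))].

Definition delta1 (D : A -> B) : A -> A -> B :=
  fun a0 a1 => brB (phi0 a0) (D a1) - brB (phi0 a1) (D a0) - D (brA a0 a1).

Definition delta2 (D : A -> A -> B) : A -> A -> A -> B :=
  fun a0 a1 a2 =>
    brB (phi0 a0) (D a1 a2) - brB (phi0 a1) (D a0 a2) + brB (phi0 a2) (D a0 a1)
    - D (brA a0 a1) a2 + D (brA a0 a2) a1 - D (brA a1 a2) a0.

Definition H2der_trivial : Prop :=
  forall D : A -> A -> B, C2der D -> (forall a0 a1 a2, delta2 D a0 a1 a2 = 0) ->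
    exists E : A -> B, C1der E /\ forall a0 a1, D a0 a1 = delta1 E a0 a1.

Definition has_horizontal_lift : Prop :=
  exists h : (A -> B) -> (B -> B),
    forall D, C1der D ->
      [/\ is_derivation (h D),
          (forall a y, h (fun x => phi0 a * D x) y = phi0 a * h D y) &
          (forall a, h D (phi0 a) = D a)].
End CE.

Definition fps (T : Type) := nat -> T.

Section FPS.
Variable A : comAlgType K.

Definition fps_add (f g : fps A) : fps A := fun n => f n + g n.
Definition fps_scale (k : K) (f : fps A) : fps A := fun n => k *: f n.
Definition fps_mul (f g : fps A) : fps A :=
  fun n => \sum_(i < n.+1) f i * g (n - i)%N.
Definition fps_one : fps A := fun n => if n == 0%N then 1 else 0.

(* bracket pi = sum_j lambda^j pi_j, extended K[[lambda]]-bilinearly *)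
Definition fps_br (pi : nat -> A -> A -> A) (f g : fps A) : fps A :=
  fun n => \sum_(i < n.+1) \sum_(j < (n - i).+1) pi i (f j) (g (n - i - j)%N).

Definition is_formal_poisson_deformation (pi0 : A -> A -> A)
    (pi : nat -> A -> A -> A) : Prop :=
  [/\ pi 0%N = pi0,
      (forall j, is_kbilinear (pi j)),
      (forall f g, fps_br pi f g =1 (fun n => - fps_br pi g f n)),
      (forall f g h, fps_br pi f (fps_mul g h) =1
                     fps_add (fps_mul (fps_br pi f g) h) (fps_mul g (fps_br pi f h))) &
      (forall f g h, fps_add (fps_add (fps_br pi f (fps_br pi g h))
                                      (fps_br pi g (fps_br pi h f)))
                             (fps_br pi h (fps_br pi f g)) =1 (fun _ => 0))].

(* X = sum_j lambda^j X_j acting on A[[lambda]] *)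
Definition fps_der_act (X : nat -> A -> A) (f : fps A) : fps A :=
  fun n => \sum_(i < n.+1) X i (f (n - i)%N).

(* exp(X) = sum_m X^m / m!  (for X in lambda Der[[lambda]], only m <= n
   contributes to the coefficient of lambda^n) *)
Definition fps_exp (X : nat -> A -> A) (f : fps A) : fps A :=
  fun n => \sum_(m < n.+1) (m`!%:R)^-1 *: iter m (fps_der_act X) f n.

(* X in lambda Der(A)[[lambda]] *)
Definition is_lambda_der_series (X : nat -> A -> A) : Prop :=
  X 0%N =1 (fun _ => 0) /\ forall j, is_derivation (X j).
End FPS.

Definition fps_map (A B : Type) (phi : A -> B) (f : fps A) : fps B :=
  fun n => phi (f n).

Definition is_fps_poisson_morphism (A B : comAlgType K)
    (pi : nat -> A -> A -> A) (sigma : nat -> B -> B -> B)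
    (Phi : fps A -> fps B) : Prop :=
  [/\ (forall k f g, Phi (fps_add (fps_scale k f) g) =1
                     fps_add (fps_scale k (Phi f)) (Phi g)),
      (forall f g, Phi (fps_mul f g) =1 fps_mul (Phi f) (Phi g)),
      Phi (fps_one A) =1 fps_one B &
      (forall f g, Phi (fps_br pi f g) =1 fps_br sigma (Phi f) (Phi g))].

End Defs.

From HB Require Import structures.
From mathcomp Require Import all_boot all_order all_algebra.
From mathcomp Require Import zify ring.
From Stdlib Require Import FunctionalExtensionality ClassicalEpsilon.
Set Implicit Arguments. Unset Strict Implicit. Unset Printing Implicit Defensive.
Import GRing.Theory.
Local Open Scope ring_scope.

(** The morphism is built order by order in [λ].  For [Φ = exp(X) φ0] the
    defect [Δ(f, g) = Φ π(f, g) - σ(Φ f, Φ g)] is biadditive, antisymmetric, a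
    derivation along [Φ] and compatible with multiplication by [λ].  Hence if
    it vanishes up to order [n] on constants it vanishes up to order [n]
    everywhere, and its coefficient of order [n+1] on constants is a cochain of
    [C²_CE,der] which the Jacobi identities of [π] and [σ] turn into a cocycle.
    Writing it as [δE] and adding [λ^(n+1) E^h] to [X] kills the defect at
    order [n+1], because [E^h ∘ φ0 = E]; lower orders are untouched, so the
    successive corrections stabilise coefficientwise to a solution.  That [exp(X)] is
    multiplicative is the divided-power Leibniz rule
    [X^m(fg)/m! = Σ_k (X^k f/k!)(X^(m-k) g/(m-k)!)], which needs
    characteristic 0. *)

Section TriangularSums.
Variable V : nmodType.

Lemma big_triangle_mkcond (H : nat -> nat -> V) n :
  \sum_(i < n.+1) \sum_(j < (n - i).+1) H i j =
  \sum_(i < n.+1) \sum_(j < n.+1) (if (i + j <= n)%N then H i j else 0).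
Proof.
apply: eq_bigr => i _; have := ltn_ord i => lt_i_n.
rewrite (big_ord_widen n.+1 (fun j => H i j)) ?ltnS ?leq_subr // big_mkcond.
by apply: eq_bigr => j _; have -> : (j < (n - i).+1)%N = (i + j <= n)%N by lia.
Qed.

Lemma exchange_big_triangle (H : nat -> nat -> V) n :
  \sum_(i < n.+1) \sum_(j < (n - i).+1) H i j =
  \sum_(j < n.+1) \sum_(i < (n - j).+1) H i j.
Proof.
rewrite big_triangle_mkcond (big_triangle_mkcond (fun j i => H i j)) exchange_big.
by apply: eq_bigr => i _; apply: eq_bigr => j _; rewrite addnC.
Qed.

Lemma big_antidiagonal (H : nat -> nat -> V) n :
  \sum_(m < n.+1) \sum_(k < m.+1) H k (m - k)%N =
  \sum_(k < n.+1) \sum_(l < (n - k).+1) H k l.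
Proof.
elim: n => [|n IHn]; first by rewrite !big_ord1.
rewrite big_ord_recr /= IHn.
rewrite [RHS](eq_bigr (fun k : 'I_n.+2 =>
   \sum_(l < n.+1 - k) H k l + H k (n.+1 - k)%N)); last by move=> k _; rewrite big_ord_recr.
rewrite big_split /= [in RHS]big_ord_recr /= subnn big_ord0 addr0.
by congr (_ + _); apply: eq_bigr => k _; rewrite subSn // -ltnS.
Qed.

Lemma big_ord_widen_eq0 (F : nat -> V) p q : (p <= q)%N ->
  (forall j, (p <= j)%N -> (j < q)%N -> F j = 0) ->
  \sum_(j < p) F j = \sum_(j < q) F j.
Proof.
move=> le_pq F0; rewrite (big_ord_widen q F le_pq) big_mkcond.
by apply: eq_bigr => j _; case: ltnP => // /F0 ->.
Qed.

End TriangularSums.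

Section KLinear.
Variables (K : fieldType) (U V : lmodType K) (f : U -> V).
Hypothesis f_lin : is_klinear f.

Lemma klinear0 : f 0 = 0.
Proof.
have := f_lin 1 0 0; rewrite scale1r addr0 => /(congr1 (fun x => x - f 0)).
by rewrite subrr addrK scale1r.
Qed.

Lemma klinearD x y : f (x + y) = f x + f y.
Proof. by have := f_lin 1 x y; rewrite !scale1r. Qed.

Lemma klinearZ k x : f (k *: x) = k *: f x.
Proof. by have := f_lin k x 0; rewrite !addr0 klinear0 addr0. Qed.

Lemma klinearN x : f (- x) = - f x.
Proof. by rewrite -scaleN1r klinearZ scaleN1r. Qed.

Lemma klinear_sum (I : Type) (r : seq I) (P : pred I) (F : I -> U) :
  f (\sum_(i <- r | P i) F i) = \sum_(i <- r | P i) f (F i).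
Proof. exact: (big_morph f klinearD klinear0). Qed.

End KLinear.

Definition fps_const (T : nmodType) (a : T) : fps T :=
  fun n => if n == 0%N then a else 0.

Definition fps_shift (T : nmodType) (f : fps T) : fps T :=
  fun n => if n is n'.+1 then f n' else 0.

Definition fps_tail (T : Type) (f : fps T) : fps T := fun n => f n.+1.

Section FpsRing.
Variables (K : fieldType) (T : comAlgType K).
Implicit Types (f g : fps T) (a b : T).

Lemma fps_scale1 f : fps_scale 1 f = f.
Proof. by apply: functional_extensionality => n; rewrite /fps_scale scale1r. Qed.

Lemma fps_const_shift_tail f : f = fps_add (fps_const (f 0%N)) (fps_shift (fps_tail f)).
Proof. by apply: functional_extensionality => -[|n]; rewrite /fps_add /= ?addr0 ?add0r. Qed.

Lemma fps_const_lin k a b :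
  fps_const (k *: a + b) = fps_add (fps_scale k (fps_const a)) (fps_const b).
Proof.
apply: functional_extensionality => n; rewrite /fps_add /fps_scale /fps_const.
by case: ifP; rewrite ?scaler0 ?addr0.
Qed.

Lemma fps_mulC f g : fps_mul f g = fps_mul g f.
Proof.
apply: functional_extensionality => n; rewrite /fps_mul (reindex_inj rev_ord_inj) /=.
by apply: eq_bigr => j _; rewrite mulrC; congr (g _ * f _); have := ltn_ord j; lia.
Qed.

Lemma fps_mul_const a b : fps_mul (fps_const a) (fps_const b) = fps_const (a * b).
Proof.
apply: functional_extensionality => n; rewrite /fps_mul big_ord_recl subn0.
rewrite big1 ?addr0; last by move=> i _; rewrite /fps_const mul0r.
by rewrite /fps_const; case: n => [|n] /=; rewrite ?mulr0.
Qed.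

Lemma fps_mul_leadr n f g : (forall j, (j <= n)%N -> g j = 0) ->
  fps_mul f g n.+1 = f 0%N * g n.+1.
Proof.
move=> g_low; rewrite /fps_mul big_ord_recl subn0 big1 ?addr0 // => i _.
by rewrite g_low ?mulr0 // lift0 subSS leq_subr.
Qed.

Lemma fps_mul_leadl n f g : (forall j, (j <= n)%N -> f j = 0) ->
  fps_mul f g n.+1 = f n.+1 * g 0%N.
Proof. by move=> f_low; rewrite fps_mulC (fps_mul_leadr _ f_low) mulrC. Qed.

Lemma fps_mulBl (f f' g : fps T) n :
  fps_mul (fun i => f i - f' i) g n = fps_mul f g n - fps_mul f' g n.
Proof. by rewrite /fps_mul -sumrB; apply: eq_bigr => i _; rewrite mulrBl. Qed.

Lemma fps_mulBr (f g g' : fps T) n :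
  fps_mul f (fun i => g i - g' i) n = fps_mul f g n - fps_mul f g' n.
Proof. by rewrite /fps_mul -sumrB; apply: eq_bigr => i _; rewrite mulrBr. Qed.

Lemma fps_mulMnl f g p : fps_mul (fun n => f n *+ p) g = fun n => fps_mul f g n *+ p.
Proof.
apply: functional_extensionality => n; rewrite /fps_mul -sumrMnl.
by apply: eq_bigr => i _; rewrite mulrnAl.
Qed.

Lemma fps_mulMnr f g p : fps_mul f (fun n => g n *+ p) = fun n => fps_mul f g n *+ p.
Proof.
apply: functional_extensionality => n; rewrite /fps_mul -sumrMnl.
by apply: eq_bigr => i _; rewrite mulrnAr.
Qed.

End FpsRing.

Section FpsBracket.
Variables (K : fieldType) (T : comAlgType K).
Implicit Types (f g : fps T) (a b : T).

Lemma kbilinear_flip (pi : nat -> T -> T -> T) :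
  (forall j, is_kbilinear (pi j)) -> forall j, is_kbilinear (fun x y => pi j y x).
Proof. by move=> pi_bil j; split; case: (pi_bil j). Qed.

Lemma fps_br_flip (pi : nat -> T -> T -> T) f g :
  fps_br pi f g = fps_br (fun i x y => pi i y x) g f.
Proof.
apply: functional_extensionality => n; rewrite /fps_br.
apply: eq_bigr => i _; rewrite (reindex_inj rev_ord_inj) /=.
apply: eq_bigr => j _; have := ltn_ord j; have := ltn_ord i => lt_i lt_j.
by congr (pi _ (f _) (g _)); lia.
Qed.

Variables (pi : nat -> T -> T -> T) (pi_bil : forall j, is_kbilinear (pi j)).

Lemma kbilinear0l j y : pi j 0 y = 0.
Proof. exact: (klinear0 (proj1 (pi_bil j) y)). Qed.

Lemma kbilinear0r j x : pi j x 0 = 0.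
Proof. exact: (klinear0 (proj2 (pi_bil j) x)). Qed.

Lemma fps_br_linl k f1 f2 g :
  fps_br pi (fps_add (fps_scale k f1) f2) g =
  fps_add (fps_scale k (fps_br pi f1 g)) (fps_br pi f2 g).
Proof.
apply: functional_extensionality => n; rewrite /fps_br /fps_add /fps_scale.
rewrite scaler_sumr -big_split; apply: eq_bigr => i _.
rewrite scaler_sumr -big_split; apply: eq_bigr => j _.
exact: (proj1 (pi_bil i)).
Qed.

Lemma fps_br_linr k f g1 g2 :
  fps_br pi f (fps_add (fps_scale k g1) g2) =
  fps_add (fps_scale k (fps_br pi f g1)) (fps_br pi f g2).
Proof.
apply: functional_extensionality => n; rewrite /fps_br /fps_add /fps_scale.
rewrite scaler_sumr -big_split; apply: eq_bigr => i _.
rewrite scaler_sumr -big_split; apply: eq_bigr => j _.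
exact: (proj2 (pi_bil i)).
Qed.

Lemma fps_br_addl f1 f2 g :
  fps_br pi (fps_add f1 f2) g = fps_add (fps_br pi f1 g) (fps_br pi f2 g).
Proof. by rewrite -{1}[f1]fps_scale1 fps_br_linl fps_scale1. Qed.

Lemma fps_br_addr f g1 g2 :
  fps_br pi f (fps_add g1 g2) = fps_add (fps_br pi f g1) (fps_br pi f g2).
Proof. by rewrite -{1}[g1]fps_scale1 fps_br_linr fps_scale1. Qed.

Lemma fps_br_coef0 f g : fps_br pi f g 0%N = pi 0%N (f 0%N) (g 0%N).
Proof. by rewrite /fps_br !big_ord1. Qed.

Lemma fps_br_trunc m f f' g g' :
  (forall j, (j <= m)%N -> f j = f' j) -> (forall j, (j <= m)%N -> g j = g' j) ->
  fps_br pi f g m = fps_br pi f' g' m.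
Proof.
move=> eq_f eq_g; rewrite /fps_br; apply: eq_bigr => i _; apply: eq_bigr => j _.
have := ltn_ord i; have := ltn_ord j => lt_j lt_i.
by rewrite eq_f ?eq_g //; lia.
Qed.

Lemma fps_br_shiftl f g : fps_br pi (fps_shift f) g = fps_shift (fps_br pi f g).
Proof.
apply: functional_extensionality => -[|n]; first by rewrite fps_br_coef0 /= kbilinear0l.
rewrite /= /fps_br big_ord_recr /= subnn big_ord1 /= kbilinear0l addr0.
apply: eq_bigr => i _; have := ltn_ord i => lt_i_n.
rewrite subSn // big_ord_recl /= kbilinear0l add0r; apply: eq_bigr => j _.
by rewrite /bump leq0n add1n add0n subSS.
Qed.

Lemma fps_br_const a b : fps_br pi (fps_const a) (fps_const b) = fun n => pi n a b.
Proof.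
apply: functional_extensionality => n; rewrite /fps_br.
rewrite big_ord_recr /= subnn big_ord1 /fps_const /=.
rewrite big1 ?add0r // => i _; have := ltn_ord i => lt_i_n.
rewrite big_ord_recl /= subn0 big1 ?addr0; last by move=> j _; rewrite kbilinear0l.
by rewrite subn_eq0 leqNgt lt_i_n kbilinear0r.
Qed.

Lemma fps_br_leadr n f g : (forall j, (j <= n)%N -> g j = 0) ->
  fps_br pi f g n.+1 = pi 0%N (f 0%N) (g n.+1).
Proof.
move=> g_low; rewrite /fps_br big_ord_recl /= subn0 big_ord_recl /= subn0.
rewrite big1 ?addr0; last first.
  by move=> j _; rewrite g_low ?kbilinear0r // /bump leq0n add1n subSS leq_subr.
rewrite big1 ?addr0 // => i _; apply: big1 => j _.
rewrite g_low ?kbilinear0r //; apply: leq_trans (leq_subr _ _) _.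
by rewrite /bump leq0n add1n subSS leq_subr.
Qed.

End FpsBracket.

Section FpsBracketRight.
Variables (K : fieldType) (T : comAlgType K).
Implicit Types (f g : fps T) (a b : T).
Variables (pi : nat -> T -> T -> T) (pi_bil : forall j, is_kbilinear (pi j)).

Lemma fps_br_shiftr f g : fps_br pi f (fps_shift g) = fps_shift (fps_br pi f g).
Proof.
by rewrite fps_br_flip fps_br_shiftl ?[fps_br pi f g]fps_br_flip //; apply: kbilinear_flip.
Qed.

Lemma fps_br_leadl n f g : (forall j, (j <= n)%N -> f j = 0) ->
  fps_br pi f g n.+1 = pi 0%N (f n.+1) (g 0%N).
Proof. by move=> f_low; rewrite fps_br_flip (fps_br_leadr (kbilinear_flip pi_bil)). Qed.

End FpsBracketRight.

Section DerivationAction.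
Variables (K : fieldType) (T : comAlgType K) (X : nat -> T -> T).
Hypothesis X0 : X 0%N =1 (fun _ => 0).
Hypothesis X_lin : forall j, is_klinear (X j).
Implicit Types (f g : fps T).
Local Notation D := (fps_der_act X).

Lemma der_act_lin k f g : D (fps_add (fps_scale k f) g) = fps_add (fps_scale k (D f)) (D g).
Proof.
apply: functional_extensionality => n; rewrite /fps_der_act /fps_add /fps_scale.
by rewrite scaler_sumr -big_split; apply: eq_bigr => i _; apply: X_lin.
Qed.

Lemma der_actZ k f : D (fps_scale k f) = fps_scale k (D f).
Proof.
apply: functional_extensionality => n; rewrite /fps_der_act /fps_scale scaler_sumr.
by apply: eq_bigr => i _; apply: (klinearZ (X_lin _)).
Qed.

Lemma der_act_coef0 f : D f 0%N = 0.
Proof. by rewrite /fps_der_act big_ord1 X0. Qed.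

Lemma der_act_sum (I : finType) (F : I -> fps T) :
  D (fun n => \sum_(i : I) F i n) = fun n => \sum_(i : I) D (F i) n.
Proof.
apply: functional_extensionality => n; rewrite /fps_der_act.
by under eq_bigr do rewrite (klinear_sum (X_lin _)); rewrite exchange_big.
Qed.

Lemma iter_der_act_lin m k f g : iter m D (fps_add (fps_scale k f) g) =
  fps_add (fps_scale k (iter m D f)) (iter m D g).
Proof. by elim: m => [|m IHm] //=; rewrite IHm der_act_lin. Qed.

Lemma iter_der_act_zero m : iter m D (fun _ => 0) = fun _ => 0.
Proof.
elim: m => [|m IHm] //=; rewrite IHm; apply: functional_extensionality => n.
by apply: big1 => i _; rewrite (klinear0 (X_lin _)).
Qed.

Lemma iter_der_act_low m f k : (k < m)%N -> iter m D f k = 0.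
Proof.
elim: m k => [|m IHm] k // lt_k_m; rewrite iterS /fps_der_act.
apply: big1 => i _; case: (posnP i) => [->|i_gt0]; first by rewrite X0.
by rewrite IHm ?(klinear0 (X_lin _)) //; have := ltn_ord i; lia.
Qed.

Lemma der_act_shift f : D (fps_shift f) = fps_shift (D f).
Proof.
apply: functional_extensionality => -[|n]; first exact: der_act_coef0.
rewrite /= /fps_der_act big_ord_recr /= subnn /= (klinear0 (X_lin _)) addr0.
by apply: eq_bigr => i _; rewrite subSn // -ltnS.
Qed.

Lemma iter_der_act_shift m f : iter m D (fps_shift f) = fps_shift (iter m D f).
Proof. by elim: m => [|m IHm] //=; rewrite IHm der_act_shift. Qed.

Hypothesis X_der : forall j, is_derivation (X j).

Lemma der_act_mul f g : D (fps_mul f g) = fps_add (fps_mul (D f) g) (fps_mul f (D g)).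
Proof.
apply: functional_extensionality => n; rewrite /fps_der_act /fps_add /fps_mul.
under eq_bigr do rewrite (klinear_sum (X_lin _)).
under eq_bigr do under eq_bigr do rewrite (proj2 (X_der _)).
under eq_bigr do rewrite big_split /=.
rewrite big_split /= addrC; congr (_ + _).
  rewrite -(big_antidiagonal (fun i j => X i (f j) * g (n - i - j)%N)).
  apply: eq_bigr => m _; rewrite mulr_suml; apply: eq_bigr => k _.
  by have := ltn_ord m; have := ltn_ord k => lt_k lt_m; congr (_ * g _); lia.
rewrite (exchange_big_triangle (fun i j => f j * X i (g (n - i - j)%N))).
apply: eq_bigr => j _; rewrite mulr_sumr; apply: eq_bigr => i _.
by rewrite subnAC.
Qed.

Lemma derivation1 (Y : T -> T) : is_derivation Y -> Y 1 = 0.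
Proof.
case=> _ Y_mul; have := Y_mul 1 1; rewrite !mulr1 mul1r.
by move/(congr1 (fun x => x - Y 1)); rewrite subrr addrK.
Qed.

Lemma der_act_one : D (fps_one T) = fun _ => 0.
Proof.
apply: functional_extensionality => n; apply: big1 => i _.
by rewrite /fps_one; case: ifP => _; rewrite ?derivation1 ?(klinear0 (X_lin _)).
Qed.

End DerivationAction.

Lemma mulrSnI (K : fieldType) (V : lmodType K) (x y : V) p :
  [pchar K] =i pred0 -> x *+ p.+1 = y *+ p.+1 -> x = y.
Proof.
move=> /pcharf0P K0; rewrite -!scaler_nat => /(congr1 (fun z => (p.+1%:R)^-1 *: z)).
by rewrite !scalerA mulVf ?scale1r // K0.
Qed.

Section Exponential.
Variables (K : fieldType) (T : comAlgType K) (X : nat -> T -> T).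
Hypothesis K0 : [pchar K] =i pred0.
Hypothesis X0 : X 0%N =1 (fun _ => 0).
Hypothesis X_der : forall j, is_derivation (X j).
Let X_lin j : is_klinear (X j). Proof. by case: (X_der j). Qed.
Implicit Types (f g : fps T).
Local Notation D := (fps_der_act X).

Definition fps_dpow f k : fps T := fun n => (k`!%:R)^-1 *: iter k D f n.

Definition fps_dpow_conv f g m : fps T :=
  fun n => \sum_(k < m.+1) fps_mul (fps_dpow f k) (fps_dpow g (m - k)) n.

Lemma fps_dpow0 f : fps_dpow f 0 = f.
Proof. by apply: functional_extensionality => n; rewrite /fps_dpow invr1 scale1r. Qed.

Lemma fps_dpow_low f k n : (n < k)%N -> fps_dpow f k n = 0.
Proof. by move=> lt_n_k; rewrite /fps_dpow iter_der_act_low ?scaler0. Qed.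

Lemma der_act_dpow f k : D (fps_dpow f k) = fun n => fps_dpow f k.+1 n *+ k.+1.
Proof.
rewrite -[fps_dpow f k]/(fps_scale _ (iter k D f)) der_actZ //.
apply: functional_extensionality => n; rewrite /fps_scale /fps_dpow -scaler_nat scalerA.
rewrite factS natrM invfM mulrA mulfV ?mul1r //.
by move/pcharf0P: K0 => ->.
Qed.

Lemma der_act_dpow_conv f g m :
  D (fps_dpow_conv f g m) = fun n => fps_dpow_conv f g m.+1 n *+ m.+1.
Proof.
rewrite /fps_dpow_conv der_act_sum //; apply: functional_extensionality => n.
under eq_bigr do rewrite der_act_mul // !der_act_dpow fps_mulMnl fps_mulMnr /fps_add.
pose c k := fps_mul (fps_dpow f k) (fps_dpow g (m.+1 - k)) n.
rewrite big_split /= (eq_bigr (fun k : 'I_m.+1 => c k.+1 *+ k.+1)) //.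
rewrite [X in _ + X](eq_bigr (fun k : 'I_m.+1 => c k *+ (m.+1 - k))); last first.
  by move=> k _; have := ltn_ord k; rewrite ltnS => le_k_m; rewrite /c subSn.
have -> : \sum_(k < m.+1) c k.+1 *+ k.+1 = \sum_(k < m.+2) c k *+ k.
  by rewrite [RHS]big_ord_recl mulr0n add0r.
have -> : \sum_(k < m.+1) c k *+ (m.+1 - k) = \sum_(k < m.+2) c k *+ (m.+1 - k).
  by rewrite [RHS]big_ord_recr /= subnn mulr0n addr0.
rewrite -big_split -sumrMnl; apply: eq_bigr => k _ /=.
by rewrite -mulrnDr; congr (_ *+ _); have := ltn_ord k; lia.
Qed.

Lemma fps_dpow_mul f g m : fps_dpow (fps_mul f g) m = fps_dpow_conv f g m.
Proof.
elim: m => [|m IHm].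
  by apply: functional_extensionality => n; rewrite /fps_dpow_conv big_ord1 !fps_dpow0.
apply: functional_extensionality => n; apply: (mulrSnI (p := m) K0).
have := congr1 (fun h => h n) (der_act_dpow (fps_mul f g) m).
by rewrite IHm der_act_dpow_conv => <-.
Qed.

Lemma fps_exp_dpow f n : fps_exp X f n = \sum_(m < n.+1) fps_dpow f m n.
Proof. by []. Qed.

Lemma fps_exp_dpow_widen f N n : (n < N)%N ->
  fps_exp X f n = \sum_(m < N) fps_dpow f m n.
Proof.
move=> lt_n_N; rewrite fps_exp_dpow (@big_ord_widen_eq0 _ (fun m => fps_dpow f m n) n.+1 N) //.
by move=> m lt_n_m _; rewrite fps_dpow_low.
Qed.

Lemma fps_expM f g : fps_exp X (fps_mul f g) = fps_mul (fps_exp X f) (fps_exp X g).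
Proof.
apply: functional_extensionality => n.
pose c k l i := fps_dpow f k i * fps_dpow g l (n - i)%N.
transitivity (\sum_(k < n.+1) \sum_(l < n.+1) \sum_(i < n.+1) c k l i).
  rewrite fps_exp_dpow; under eq_bigr do rewrite fps_dpow_mul.
  rewrite /fps_dpow_conv.
  rewrite (big_antidiagonal (fun k l => fps_mul (fps_dpow f k) (fps_dpow g l) n)).
  apply: eq_bigr => k _; apply: (@big_ord_widen_eq0 _ (fun l => \sum_(i < n.+1) c k l i)).
    by rewrite ltnS leq_subr.
  move=> l lt_nk_l _; apply: big1 => i _; have := ltn_ord i => lt_i.
  have [lt_i_k|le_k_i] := ltnP i k; first by rewrite /c fps_dpow_low ?mul0r.
  by rewrite /c (@fps_dpow_low g) ?mulr0 //; lia.
under eq_bigr do rewrite exchange_big; rewrite exchange_big.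
apply: eq_bigr => i _; have lt_ni_n : (n - i < n.+1)%N by rewrite ltnS leq_subr.
rewrite (fps_exp_dpow_widen f (ltn_ord i)) (fps_exp_dpow_widen g lt_ni_n).
by rewrite mulr_suml; apply: eq_bigr => k _; rewrite mulr_sumr.
Qed.

Lemma fps_exp_lin k f g : fps_exp X (fps_add (fps_scale k f) g) =
  fps_add (fps_scale k (fps_exp X f)) (fps_exp X g).
Proof.
apply: functional_extensionality => n; rewrite /fps_exp.
under eq_bigr do rewrite (iter_der_act_lin X_lin).
rewrite /fps_add /fps_scale scaler_sumr -big_split; apply: eq_bigr => m _ /=.
by rewrite scalerDr !scalerA mulrC.
Qed.

Lemma fps_exp_coef0 f : fps_exp X f 0%N = f 0%N.
Proof. by rewrite fps_exp_dpow big_ord1 fps_dpow0. Qed.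

Lemma fps_exp_shift f : fps_exp X (fps_shift f) = fps_shift (fps_exp X f).
Proof.
apply: functional_extensionality => -[|n]; first by rewrite fps_exp_coef0.
rewrite /fps_exp /=; under eq_bigr do rewrite (iter_der_act_shift X0 X_lin).
by rewrite big_ord_recr /= -iterS iter_der_act_low ?scaler0 ?addr0.
Qed.

Lemma fps_exp1 : fps_exp X (fps_one T) = fps_one T.
Proof.
apply: functional_extensionality => n; rewrite fps_exp_dpow big_ord_recl fps_dpow0.
rewrite big1 ?addr0 // => i _.
by rewrite /fps_dpow lift0 iterSr der_act_one // iter_der_act_zero // scaler0.
Qed.

End Exponential.

Section ExponentialTruncation.
Variables (K : fieldType) (T : comAlgType K).
Implicit Types (X : nat -> T -> T) (f : fps T).

Lemma iter_der_act_trunc X X' p : (forall i, (i <= p)%N -> X' i = X i) ->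
  forall m f k, (k <= p)%N -> iter m (fps_der_act X') f k = iter m (fps_der_act X) f k.
Proof.
move=> eqX; elim=> [|m IHm] f k le_k_p //=.
rewrite /fps_der_act; apply: eq_bigr => i _; have := ltn_ord i => lt_i.
by rewrite eqX ?IHm //; lia.
Qed.

Lemma fps_exp_trunc X X' p : (forall i, (i <= p)%N -> X' i = X i) ->
  forall f k, (k <= p)%N -> fps_exp X' f k = fps_exp X f k.
Proof.
move=> eqX f k le_k_p; rewrite /fps_exp; apply: eq_bigr => m _.
by rewrite (iter_der_act_trunc eqX).
Qed.

Definition add_term X k (Y : T -> T) : nat -> T -> T :=
  fun j => if j == k then (fun b => X j b + Y b) else X j.

Lemma add_term_low X n Y i : (i <= n)%N -> add_term X n.+1 Y i = X i.
Proof. by move=> le_i_n; rewrite /add_term ltn_eqF. Qed.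

Lemma derivationD (Y Z : T -> T) : is_derivation Y -> is_derivation Z ->
  is_derivation (fun b => Y b + Z b).
Proof.
move=> [Y_lin Y_mul] [Z_lin Z_mul]; split.
  by move=> k x y; rewrite Y_lin Z_lin scalerDr addrACA.
by move=> x y; rewrite Y_mul Z_mul mulrDr mulrDl addrACA.
Qed.

Lemma lambda_der_series_add_term X n Y :
  is_lambda_der_series X -> is_derivation Y -> is_lambda_der_series (add_term X n.+1 Y).
Proof.
move=> [X0 X_der] Y_der; split; first by move=> b; rewrite /add_term /= X0.
by move=> j; rewrite /add_term; case: eqP => _; [apply: derivationD | apply: X_der].
Qed.

Variables (X : nat -> T -> T) (n : nat) (Y : T -> T).
Hypothesis X0 : X 0%N =1 (fun _ => 0).
Hypothesis X_lin : forall j, is_klinear (X j).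
Hypothesis Y_lin : is_klinear Y.
Let agree := @add_term_low X n Y.

(* Only the first power of the derivation sees the new term at order [n+1]. *)
Lemma iter_der_act_add_term m f : iter m (fps_der_act (add_term X n.+1 Y)) f n.+1 =
  iter m (fps_der_act X) f n.+1 + (if m == 1%N then Y (f 0%N) else 0).
Proof.
case: m => [|m] /=; first by rewrite addr0.
rewrite /fps_der_act big_ord_recr [in RHS]big_ord_recr /= subnn /add_term eqxx.
rewrite (iter_der_act_trunc agree) // addrA; congr (_ + _ + _).
  apply: eq_bigr => i _; have := ltn_ord i => lt_i.
  rewrite ltn_eqF //; have [->|i_gt0] := posnP i; first by rewrite !X0.
  by rewrite (iter_der_act_trunc agree) //; lia.
by case: m => [|m] //; rewrite iter_der_act_low ?(klinear0 Y_lin).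
Qed.

Lemma fps_exp_add_term f : fps_exp (add_term X n.+1 Y) f n.+1 = fps_exp X f n.+1 + Y (f 0%N).
Proof.
rewrite /fps_exp; under eq_bigr do rewrite iter_der_act_add_term scalerDr.
rewrite big_split /=; congr (_ + _).
rewrite big_ord_recl /= scaler0 add0r big_ord_recl /= invr1 scale1r.
by rewrite big1 ?addr0 // => i _; rewrite scaler0.
Qed.

End ExponentialTruncation.

Section ShiftCompatibleBiadditive.
Variables (K : fieldType) (T U : comAlgType K) (F : fps T -> fps T -> fps U).
Hypothesis F_addl : forall f1 f2 g, F (fps_add f1 f2) g = fun m => F f1 g m + F f2 g m.
Hypothesis F_addr : forall f g1 g2, F f (fps_add g1 g2) = fun m => F f g1 m + F f g2 m.
Hypothesis F_shiftl : forall f g, F (fps_shift f) g = fps_shift (F f g).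
Hypothesis F_shiftr : forall f g, F f (fps_shift g) = fps_shift (F f g).

Lemma shift_biadditive_coef0 f g : F f g 0%N = F (fps_const (f 0%N)) (fps_const (g 0%N)) 0%N.
Proof.
rewrite {1}(fps_const_shift_tail f) F_addl F_shiftl /= addr0.
by rewrite {1}(fps_const_shift_tail g) F_addr F_shiftr /= addr0.
Qed.

Lemma shift_biadditive_coefS f g m : F f g m.+1 =
  F (fps_const (f 0%N)) (fps_const (g 0%N)) m.+1 +
  F (fps_const (f 0%N)) (fps_tail g) m + F (fps_tail f) g m.
Proof.
rewrite {1}(fps_const_shift_tail f) F_addl F_shiftl /=.
by rewrite {1}(fps_const_shift_tail g) F_addr F_shiftr.
Qed.

Variable n : nat.
Hypothesis F_const_low : forall a b m, (m <= n)%N -> F (fps_const a) (fps_const b) m = 0.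

Lemma shift_biadditive_low m f g : (m <= n)%N -> F f g m = 0.
Proof.
elim: m f g => [|m IHm] f g le_m_n; first by rewrite shift_biadditive_coef0 F_const_low.
by rewrite shift_biadditive_coefS F_const_low // !IHm ?addr0 // ltnW.
Qed.

Lemma shift_biadditive_lead f g :
  F f g n.+1 = F (fps_const (f 0%N)) (fps_const (g 0%N)) n.+1.
Proof.
rewrite shift_biadditive_coefS [F _ (fps_tail g) n]shift_biadditive_low //.
by rewrite [F (fps_tail f) g n]shift_biadditive_low // !addr0.
Qed.

End ShiftCompatibleBiadditive.

Section PoissonDefect.
Variables (K : fieldType) (A B : comAlgType K).
Variables (pi0 : A -> A -> A) (sigma0 : B -> B -> B) (phi0 : A -> B).
Variables (pi : nat -> A -> A -> A) (sigma : nat -> B -> B -> B).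
Hypothesis K0 : [pchar K] =i pred0.
Hypothesis pi0_poisson : is_poisson_bracket pi0.
Hypothesis sigma0_poisson : is_poisson_bracket sigma0.
Hypothesis phi0_poisson : is_poisson_morphism pi0 sigma0 phi0.
Hypothesis pi_def : is_formal_poisson_deformation pi0 pi.
Hypothesis sigma_def : is_formal_poisson_deformation sigma0 sigma.

Let phi0_lin : is_klinear phi0. Proof. by case: phi0_poisson => -[]. Qed.
Let phi0M a b : phi0 (a * b) = phi0 a * phi0 b. Proof. by case: phi0_poisson => -[]. Qed.
Let phi0_1 : phi0 1 = 1. Proof. by case: phi0_poisson => -[]. Qed.
Let phi0_br a b : phi0 (pi0 a b) = sigma0 (phi0 a) (phi0 b).
Proof. by case: phi0_poisson. Qed.
Let pi_bil : forall j, is_kbilinear (pi j). Proof. by case: pi_def. Qed.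
Let sigma_bil : forall j, is_kbilinear (sigma j). Proof. by case: sigma_def. Qed.
Let pi_coef0 : pi 0%N = pi0. Proof. by case: pi_def. Qed.
Let sigma_coef0 : sigma 0%N = sigma0. Proof. by case: sigma_def. Qed.

Implicit Types (f g h : fps A) (a b c : A) (X : nat -> B -> B).

Lemma fps_map_lin k f g : fps_map phi0 (fps_add (fps_scale k f) g) =
  fps_add (fps_scale k (fps_map phi0 f)) (fps_map phi0 g).
Proof. by apply: functional_extensionality => n; rewrite /fps_map phi0_lin. Qed.

Lemma fps_map_shift f : fps_map phi0 (fps_shift f) = fps_shift (fps_map phi0 f).
Proof. by apply: functional_extensionality => -[|n] //; rewrite /fps_map /= klinear0. Qed.

Lemma fps_mapM f g : fps_map phi0 (fps_mul f g) = fps_mul (fps_map phi0 f) (fps_map phi0 g).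
Proof.
apply: functional_extensionality => n; rewrite /fps_map /fps_mul (klinear_sum phi0_lin).
by apply: eq_bigr => i _; rewrite phi0M.
Qed.

Lemma fps_map1 : fps_map phi0 (fps_one A) = fps_one B.
Proof.
by apply: functional_extensionality => n; rewrite /fps_map /fps_one; case: ifP; rewrite ?klinear0.
Qed.

Definition Phi X f : fps B := fps_exp X (fps_map phi0 f).

Definition poisson_defect X f g : fps B :=
  fun m => Phi X (fps_br pi f g) m - fps_br sigma (Phi X f) (Phi X g) m.

Definition defect_vanishes_to X n :=
  forall a b m, (m <= n)%N -> poisson_defect X (fps_const a) (fps_const b) m = 0.

Definition defect_cochain X n a b := poisson_defect X (fps_const a) (fps_const b) n.+1.

Lemma defect_trunc X X' p : (forall i, (i <= p)%N -> X' i = X i) ->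
  forall f g m, (m <= p)%N -> poisson_defect X' f g m = poisson_defect X f g m.
Proof.
move=> eqX f g m le_m_p; rewrite /poisson_defect /Phi (fps_exp_trunc eqX) //.
congr (_ - _); apply: fps_br_trunc => j le_j_m;
  by apply: (fps_exp_trunc eqX); apply: leq_trans le_j_m le_m_p.
Qed.

Section Series.
Variable X : nat -> B -> B.
Hypothesis X_ser : is_lambda_der_series X.
Let X0 : X 0%N =1 (fun _ => 0). Proof. by case: X_ser. Qed.
Let X_der : forall j, is_derivation (X j). Proof. by case: X_ser. Qed.
Let X_lin j : is_klinear (X j). Proof. by case: (X_der j). Qed.

Lemma Phi_lin k f g : Phi X (fps_add (fps_scale k f) g) =
  fps_add (fps_scale k (Phi X f)) (Phi X g).
Proof. by rewrite /Phi fps_map_lin fps_exp_lin. Qed.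

Lemma Phi_add f g : Phi X (fps_add f g) = fps_add (Phi X f) (Phi X g).
Proof. by rewrite -{1}[f]fps_scale1 Phi_lin fps_scale1. Qed.

Lemma Phi_zero : Phi X (fun _ => 0) = fun _ => 0.
Proof.
rewrite /Phi; have -> : fps_map phi0 (fun _ => 0) = fun _ => 0.
  by apply: functional_extensionality => n; rewrite /fps_map klinear0.
apply: functional_extensionality => n; apply: big1 => m _.
by rewrite iter_der_act_zero // scaler0.
Qed.

Lemma Phi_opp f : Phi X (fun n => - f n) = fun n => - Phi X f n.
Proof.
have opp_lin (T : comAlgType K) (u : fps T) :
    (fun n => - u n) = fps_add (fps_scale (-1) u) (fun _ => 0).
  by apply: functional_extensionality => n; rewrite /fps_add /fps_scale scaleN1r addr0.
by rewrite opp_lin Phi_lin Phi_zero -opp_lin.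
Qed.

Lemma Phi_shift f : Phi X (fps_shift f) = fps_shift (Phi X f).
Proof. by rewrite /Phi fps_map_shift fps_exp_shift. Qed.

Lemma PhiM f g : Phi X (fps_mul f g) = fps_mul (Phi X f) (Phi X g).
Proof. by rewrite /Phi fps_mapM fps_expM. Qed.

Lemma Phi1 : Phi X (fps_one A) = fps_one B.
Proof. by rewrite /Phi fps_map1 fps_exp1. Qed.

Lemma Phi_coef0 f : Phi X f 0%N = phi0 (f 0%N).
Proof. by rewrite /Phi fps_exp_coef0. Qed.

Local Notation Delta := (poisson_defect X).

Lemma defect_linl k f1 f2 g :
  Delta (fps_add (fps_scale k f1) f2) g = fps_add (fps_scale k (Delta f1 g)) (Delta f2 g).
Proof.
rewrite /poisson_defect fps_br_linl // !Phi_lin fps_br_linl //.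
apply: functional_extensionality => m; rewrite /fps_add /fps_scale.
by rewrite scalerBr opprD addrACA.
Qed.

Lemma defect_linr k f g1 g2 :
  Delta f (fps_add (fps_scale k g1) g2) = fps_add (fps_scale k (Delta f g1)) (Delta f g2).
Proof.
rewrite /poisson_defect fps_br_linr // !Phi_lin fps_br_linr //.
apply: functional_extensionality => m; rewrite /fps_add /fps_scale.
by rewrite scalerBr opprD addrACA.
Qed.

Lemma defect_addl f1 f2 g : Delta (fps_add f1 f2) g = fun m => Delta f1 g m + Delta f2 g m.
Proof. by rewrite -{1}[f1]fps_scale1 defect_linl fps_scale1. Qed.

Lemma defect_addr f g1 g2 : Delta f (fps_add g1 g2) = fun m => Delta f g1 m + Delta f g2 m.
Proof. by rewrite -{1}[g1]fps_scale1 defect_linr fps_scale1. Qed.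

Lemma defect_shiftl f g : Delta (fps_shift f) g = fps_shift (Delta f g).
Proof.
rewrite /poisson_defect fps_br_shiftl // !Phi_shift fps_br_shiftl //.
by apply: functional_extensionality => -[|m] //=; rewrite subrr.
Qed.

Lemma defect_shiftr f g : Delta f (fps_shift g) = fps_shift (Delta f g).
Proof.
rewrite /poisson_defect fps_br_shiftr // !Phi_shift fps_br_shiftr //.
by apply: functional_extensionality => -[|m] //=; rewrite subrr.
Qed.

Lemma defect_antisym f g : Delta f g = fun m => - Delta g f m.
Proof.
have [_ _ pi_anti _ _] := pi_def; have [_ _ sigma_anti _ _] := sigma_def.
rewrite /poisson_defect (functional_extensionality _ _ (pi_anti f g)) Phi_opp.
by apply: functional_extensionality => m; rewrite sigma_anti opprB opprK addrC.
Qed.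

Lemma defect_mulr f g h : Delta f (fps_mul g h) =
  fun m => fps_mul (Delta f g) (Phi X h) m + fps_mul (Phi X g) (Delta f h) m.
Proof.
have [_ _ _ pi_der _] := pi_def; have [_ _ _ sigma_der _] := sigma_def.
rewrite /poisson_defect (functional_extensionality _ _ (pi_der f g h)) Phi_add !PhiM.
rewrite (functional_extensionality _ _ (sigma_der _ _ _)).
apply: functional_extensionality => m.
by rewrite fps_mulBl fps_mulBr /fps_add opprD addrACA.
Qed.

Lemma Phi_br_br f g h m : Phi X (fps_br pi f (fps_br pi g h)) m =
  Delta f (fps_br pi g h) m + fps_br sigma (Phi X f) (Delta g h) m +
  fps_br sigma (Phi X f) (fps_br sigma (Phi X g) (Phi X h)) m.
Proof.
have PhiE u v : Phi X (fps_br pi u v) = fps_add (Delta u v) (fps_br sigma (Phi X u) (Phi X v)).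
  by apply: functional_extensionality => j; rewrite /fps_add /poisson_defect subrK.
by rewrite PhiE [in LHS]/fps_add PhiE fps_br_addr // /fps_add addrA.
Qed.

Lemma defect_low n : defect_vanishes_to X n -> forall m f g, (m <= n)%N -> Delta f g m = 0.
Proof. exact: (shift_biadditive_low defect_addl defect_addr defect_shiftl defect_shiftr). Qed.

Lemma defect_lead n : defect_vanishes_to X n ->
  forall f g, Delta f g n.+1 = defect_cochain X n (f 0%N) (g 0%N).
Proof. exact: (shift_biadditive_lead defect_addl defect_addr defect_shiftl defect_shiftr). Qed.

Lemma defect_vanishes_to0 : defect_vanishes_to X 0.
Proof.
move=> a b m; rewrite leqn0 => /eqP ->.
by rewrite /poisson_defect Phi_coef0 !fps_br_coef0 // !Phi_coef0 pi_coef0 sigma_coef0 phi0_br subrr.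
Qed.

Section Cochain.
Variable n : nat.
Hypothesis X_n : defect_vanishes_to X n.
Local Notation R := (defect_cochain X n).

Lemma defect_cochain_linl b : is_klinear (R^~ b).
Proof. by move=> k a a'; rewrite /defect_cochain fps_const_lin defect_linl. Qed.

Lemma defect_cochain_linr a : is_klinear (R a).
Proof. by move=> k b b'; rewrite /defect_cochain fps_const_lin defect_linr. Qed.

Lemma defect_cochain_antisym a b : R a b = - R b a.
Proof. by rewrite /defect_cochain defect_antisym. Qed.

Lemma defect_cochain_derr a : is_der_along phi0 (R a).
Proof.
split=> [|b c]; first exact: defect_cochain_linr.
rewrite /defect_cochain -fps_mul_const defect_mulr.
rewrite (fps_mul_leadl _ (X_n a b)) (fps_mul_leadr _ (X_n a c)).
by rewrite !Phi_coef0 /fps_const /= addrC.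
Qed.

Lemma defect_cochain_derl b : is_der_along phi0 (R^~ b).
Proof.
split=> [|a c]; first exact: defect_cochain_linl.
by rewrite defect_cochain_antisym (proj2 (defect_cochain_derr b)) opprD -mulrN -mulNr
  -!defect_cochain_antisym.
Qed.

Lemma defect_cochain_C2der : C2der phi0 R.
Proof.
split; [split|exact: defect_cochain_antisym|exact: defect_cochain_derl|exact: defect_cochain_derr].
  exact: defect_cochain_linl.
exact: defect_cochain_linr.
Qed.

Lemma defect_cochain_jacobi a b c :
  R a (pi0 b c) + sigma0 (phi0 a) (R b c) + (R b (pi0 c a) + sigma0 (phi0 b) (R c a)) +
  (R c (pi0 a b) + sigma0 (phi0 c) (R a b)) = 0.
Proof.
have [_ _ _ _ pi_jacobi] := pi_def; have [_ _ _ _ sigma_jacobi] := sigma_def.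
have expand x y z : Phi X (fps_br pi (fps_const x) (fps_br pi (fps_const y) (fps_const z))) n.+1
    = R x (pi0 y z) + sigma0 (phi0 x) (R y z) + fps_br sigma (Phi X (fps_const x))
        (fps_br sigma (Phi X (fps_const y)) (Phi X (fps_const z))) n.+1.
  rewrite Phi_br_br (defect_lead X_n) fps_br_const // fps_br_leadr //; last first.
    by move=> j; apply: (defect_low X_n).
  by rewrite Phi_coef0 pi_coef0 sigma_coef0.
have := congr1 (fun u => Phi X u n.+1)
  (functional_extensionality _ _ (pi_jacobi (fps_const a) (fps_const b) (fps_const c))).
rewrite /= Phi_zero !Phi_add /fps_add !expand => pi_J.
have := sigma_jacobi (Phi X (fps_const a)) (Phi X (fps_const b)) (Phi X (fps_const c)) n.+1.
rewrite /fps_add => sigma_J.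
by rewrite -[RHS]subr0 -{1}pi_J -sigma_J; ring.
Qed.

Lemma defect_cochain_cocycle a b c : delta2 pi0 sigma0 phi0 R a b c = 0.
Proof.
have [[_ sigma0_bil] _ _ _] := sigma0_poisson; have [_ pi0_anti _ _] := pi0_poisson.
rewrite /delta2 (defect_cochain_antisym a c) !(defect_cochain_antisym (pi0 _ _)).
rewrite (pi0_anti a c) (klinearN (defect_cochain_linr b)) (klinearN (sigma0_bil _)).
by rewrite -(defect_cochain_jacobi a b c); ring.
Qed.

End Cochain.

Lemma defect_free_poisson_morphism : (forall n, defect_vanishes_to X n) ->
  is_fps_poisson_morphism pi sigma (fun f => fps_exp X (fps_map phi0 f)).
Proof.
move=> X_all; split=> [k f g n|f g n|n|f g n].
- by rewrite -/(Phi X _) Phi_lin.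
- by rewrite -/(Phi X _) PhiM.
- by rewrite -/(Phi X _) Phi1.
- by apply/eqP; rewrite -subr_eq0 -/(Delta f g n) (defect_low (X_all n)).
Qed.

End Series.

Lemma Phi_add_term_coefS X n Y f : is_lambda_der_series X -> is_klinear Y ->
  Phi (add_term X n.+1 Y) f n.+1 = Phi X f n.+1 + Y (phi0 (f 0%N)).
Proof.
by move=> [X0 X_der] Y_lin; apply: fps_exp_add_term => // j; case: (X_der j).
Qed.

(* The coefficient of [λ^(n+1)] in [Φ] moves by [Y ∘ φ0], so the defect
   cochain moves by [- delta1 (Y ∘ φ0)]. *)
Lemma defect_add_term X n Y a b : is_lambda_der_series X -> is_klinear Y ->
  defect_cochain (add_term X n.+1 Y) n a b = defect_cochain X n a b + Y (phi0 (pi0 a b))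
  - sigma0 (Y (phi0 a)) (phi0 b) - sigma0 (phi0 a) (Y (phi0 b)).
Proof.
move=> X_ser Y_lin.
pose at_n1 (u : B) : fps B := fun j => if j == n.+1 then u else 0.
have at_n1_low u j : (j <= n)%N -> at_n1 u j = 0.
  by move=> le_j_n; rewrite /at_n1 ltn_eqF.
have Phi_const x j : (j <= n.+1)%N -> Phi (add_term X n.+1 Y) (fps_const x) j =
    fps_add (Phi X (fps_const x)) (at_n1 (Y (phi0 x))) j.
  rewrite leq_eqVlt => /predU1P [->|lt_j].
    by rewrite Phi_add_term_coefS // /fps_add /at_n1 eqxx.
  by rewrite /Phi (fps_exp_trunc (@add_term_low _ _ X n Y)) // /fps_add /at_n1 ltn_eqF ?addr0.
rewrite /defect_cochain /poisson_defect Phi_add_term_coefS //.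
rewrite (fps_br_trunc _ (Phi_const a) (Phi_const b)) fps_br_addl // !fps_br_addr //.
rewrite /fps_add (fps_br_leadr sigma_bil _ (at_n1_low _)).
rewrite !(fps_br_leadl sigma_bil _ (at_n1_low _)).
rewrite !Phi_coef0 fps_br_coef0 // /at_n1 /fps_const /= eqxx kbilinear0r // pi_coef0 sigma_coef0.
by ring.
Qed.

Lemma defect_correction X n : has_horizontal_lift phi0 -> H2der_trivial pi0 sigma0 phi0 ->
  is_lambda_der_series X -> defect_vanishes_to X n ->
  exists X', (forall i, (i <= n)%N -> X' i = X i) /\
    is_lambda_der_series X' /\ defect_vanishes_to X' n.+1.
Proof.
move=> [lift lift_spec] H2 X_ser X_n.
have [E [E_C1 dE]] := H2 _ (defect_cochain_C2der X_ser X_n) (defect_cochain_cocycle X_ser X_n).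
have [Eh_der _ Eh_phi0] := lift_spec E E_C1.
exists (add_term X n.+1 (lift E)); split; first exact: add_term_low.
split; first exact: lambda_der_series_add_term.
move=> a b m; rewrite leq_eqVlt => /predU1P [->|lt_m].
  have [_ sigma0_anti _ _] := sigma0_poisson.
  rewrite -/(defect_cochain _ n a b) defect_add_term //; last by case: Eh_der.
  by rewrite !Eh_phi0 dE /delta1 (sigma0_anti (E a)); ring.
by rewrite (defect_trunc (@add_term_low _ _ X n _)) ?X_n.
Qed.

End PoissonDefect.

Lemma exists_coherent_refinements (T : Type) (P : (nat -> T) -> nat -> Prop) (x0 : nat -> T) :
  P x0 0 ->
  (forall x n, P x n -> exists x', (forall i, (i <= n)%N -> x' i = x i) /\ P x' n.+1) ->
  exists xs : nat -> nat -> T, forall n, P (xs n) n /\ forall i, (i <= n)%N -> xs n i = xs i i.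
Proof.
move=> P0 refine.
pose next x n := epsilon (inhabits x)
  (fun x' => (forall i, (i <= n)%N -> x' i = x i) /\ P x' n.+1).
pose fix xs n := if n is n'.+1 then next (xs n') n' else x0.
have xsP n : P (xs n) n.
  by elim: n => [|n IHn] //=; have [] := epsilon_spec (inhabits (xs n)) _ (refine _ _ IHn).
exists xs => n; split => // i; elim: n => [|n IHn]; first by rewrite leqn0 => /eqP ->.
rewrite leq_eqVlt => /predU1P [-> //|lt_i_n].
have [agree _] := epsilon_spec (inhabits (xs n)) _ (refine _ _ (xsP n)).
exact: etrans (agree i lt_i_n) (IHn lt_i_n).
Qed.

Theorem proposition3p6 (K : fieldType) (A B : comAlgType K)
    (pi0 : A -> A -> A) (sigma0 : B -> B -> B) (phi0 : A -> B) :
  [pchar K] =i pred0 ->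
  is_poisson_bracket pi0 ->
  is_poisson_bracket sigma0 ->
  is_poisson_morphism pi0 sigma0 phi0 ->
  has_horizontal_lift phi0 ->
  H2der_trivial pi0 sigma0 phi0 ->
  forall (pi : nat -> A -> A -> A) (sigma : nat -> B -> B -> B),
    is_formal_poisson_deformation pi0 pi ->
    is_formal_poisson_deformation sigma0 sigma ->
    exists X : nat -> B -> B,
      is_lambda_der_series X /\
      is_fps_poisson_morphism pi sigma (fun f => fps_exp X (fps_map phi0 f)).
Proof.
move=> K0 pi0_P sigma0_P phi0_P lift H2 pi sigma pi_def sigma_def.
pose P X n := is_lambda_der_series X /\ defect_vanishes_to phi0 pi sigma X n.
have zero_ser : is_lambda_der_series (fun _ _ => 0 : B).
  by split=> // j; split=> [k x y|x y]; rewrite ?scaler0 ?mulr0 ?mul0r addr0.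
have P0 : P (fun _ _ => 0) 0 by split; [exact: zero_ser | exact: (defect_vanishes_to0 phi0_P pi_def sigma_def)].
have step X n : P X n -> exists X', (forall i, (i <= n)%N -> X' i = X i) /\ P X' n.+1.
  by move=> [X_ser X_n]; apply: (defect_correction K0 pi0_P sigma0_P phi0_P pi_def sigma_def).
have [Xs XsP] := exists_coherent_refinements P0 step.
pose X j := Xs j j.
have X_ser : is_lambda_der_series X.
  split=> [|j]; first by have [[[Xs0 _] _] _] := XsP 0%N.
  by have [[[_ Xs_der] _] _] := XsP j; apply: Xs_der.
exists X; split=> //.
apply: (defect_free_poisson_morphism K0 phi0_P pi_def sigma_def X_ser) => n a b m le_m_n.
have [[_ Xs_n] agree] := XsP n.
by rewrite (@defect_trunc _ _ _ phi0 pi sigma (Xs n) X n) ?Xs_n // => i /agree ->.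
Qed.
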